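(* Let $\mathcal L:\mathbb F^{q\times q}\to\mathbb F^{n\times n}$ be a $*$-linear map with Choi matrix $\mathbb L$ and matricization $L=[L_{ij}]$, and set $m=\operatorname{rank}\mathbb L$. Then: (a) for any matrices $L_1,\ldots,L_m\in\mathbb F^{n\times q}$ with $\operatorname{span}\{L_1,\ldots,L_m\}=\operatorname{span}\{L_{ij}: 1\le i\le n,\ 1\le j\le q\}$, the matrices $A_1,\ldots,A_m$ and $\mathbb H=\mathbb H(\mathcal L;L_1,\ldots,L_m)$ produced by the construction below give a minimal Hill representation $\mathcal L(V)=\sum_{k,l=1}^m \mathbb H_{kl}A_lVA_k^*$ of $\mathcal L$ (for any admissible choice of the scalars $\beta^k_{ij}$); (b) every minimal Hill representation of $\mathcal L$ is obtained in this way from some such $L_1,\ldots,L_m$; (c) the matrices $A_1,\ldots,A_m$ of any minimal Hill representation of $\mathcal L$ satisfy $\operatorname{span}\{A_1,\ldots,A_m\}=\operatorname{span}\{L_{ij}: 1\le i\le n,\ 1\le j\le q\}$; (d) conversely, any $A_1,\ldots,A_m\in\mathbb F^{n\times q}$ satisfying the span identity in (c) appear as the matrices of some minimal Hill representation of $\mathcal L$.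
   Context: $\mathbb F\in\{\mathbb R,\mathbb C\}$. For $T\in\mathbb F^{r\times s}$, $\operatorname{vec}_{r\times s}(T)\in\mathbb F^{rs}$ is the column-stacking vectorization (its $((j-1)r+i)$-th entry is $T_{ij}$). $\mathcal E^{(q)}_{ij}$ denotes the standard basis matrix of $\mathbb F^{q\times q}$ with $1$ in position $(i,j)$. For a linear map $\mathcal L:\mathbb F^{q\times q}\to\mathbb F^{n\times n}$: its matricization is the matrix $L\in\mathbb F^{n^2\times q^2}$ with $L\operatorname{vec}_{q\times q}(V)=\operatorname{vec}_{n\times n}(\mathcal L(V))$ for all $V$, written in block form $L=[L_{ij}]$, $1\le i\le n$, $1\le j\le q$, with blocks $L_{ij}\in\mathbb F^{n\times q}$; its Choi matrix is $\mathbb L=[\mathcal L(\mathcal E^{(q)}_{ij})]_{i,j=1}^q\in\mathbb F^{nq\times nq}$. $\mathcal L$ is $*$-linear if $\mathcal L(V^* )=\mathcal L(V)^*$ for all $V$. A Hill representation of $\mathcal L$ is an identity $\mathcal L(V)=\sum_{k,l=1}^m\mathbb H_{kl}A_lVA_k^*$ for all $V\in\mathbb F^{q\times q}$, with $A_1,\ldots,A_m\in\mathbb F^{n\times q}$ and $\mathbb H=[\mathbb H_{kl}]\in\mathbb F^{m\times m}$ (the Hill matrix); it is minimal if $m$ is the smallest possible among all Hill representations of $\mathcal L$. Construction: given $L_1,\ldots,L_m\in\mathbb F^{n\times q}$ whose span equals $\operatorname{span}\{L_{ij}\}$ (where $m=\operatorname{rank}\mathbb L=\dim\operatorname{span}\{L_{ij}\}$,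 so the $L_k$ are linearly independent), let $\alpha^{ij}_k$ be the unique scalars with $L_{ij}=\sum_{k=1}^m\alpha^{ij}_kL_k$ and let $\beta^k_{ij}$ be any scalars with $L_k=\sum_{i=1}^n\sum_{j=1}^q\beta^k_{ij}L_{ij}$. Set $A_k\in\mathbb F^{n\times q}$ with $(i,j)$ entry $\overline{\alpha^{ij}_k}$, $B_k\in\mathbb F^{n\times q}$ with $(i,j)$ entry $\beta^k_{ij}$, and $\mathbb H(\mathcal L;L_1,\ldots,L_m)=[\vec{\mathbf 1}_n^*(B_k\circ\overline{L_l})\vec{\mathbf 1}_q]_{k,l=1}^m=[\operatorname{trace}(B_kL_l^* )]_{k,l=1}^m$, where $\circ$ is the Hadamard (entrywise) product and $\vec{\mathbf 1}_p$ the all-ones vector in $\mathbb F^p$. *)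

From HB Require Import structures.
From mathcomp Require Import all_boot all_order all_algebra.
From mathcomp Require Import reals complex.
Set Implicit Arguments. Unset Strict Implicit. Unset Printing Implicit Defensive.
Import Order.TTheory GRing.Theory Num.Theory.
Local Open Scope ring_scope.

(* Everything is stated over a field F equipped with a map [conj] (complex
   conjugation); the theorem instantiates (F, conj) with (R, id) for the reals
   and (R[i], Num.conj) for the complex numbers, R : realType. *)
Section Hill.
Variables (F : fieldType) (conj : F -> F).

Definition adjmx (r s : nat) (A : 'M[F]_(r, s)) : 'M[F]_(s, r) := (map_mx conj A)^T.

(* column-stacking vectorization vec_{r x s}(T): entry number (j-1)r+i is T_ij
   (mxvec is row-major, mxvec_index j i = j*r + i with 0-based indices) *)
Definition vecmx (r s : nat) (T : 'M[F]_(r, s)) : 'cV[F]_(s * r) := (mxvec T^T)^T.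

Definition star_linear (q n : nat) (Lmap : 'M[F]_q -> 'M[F]_n) : Prop :=
  forall V : 'M[F]_q, Lmap (adjmx V) = adjmx (Lmap V).

Definition is_matricization (q n : nat) (Lmap : 'M[F]_q -> 'M[F]_n)
  (Lmat : 'M[F]_(n * n, q * q)) : Prop :=
  forall V : 'M[F]_q, Lmat *m vecmx V = vecmx (Lmap V).

Definition mx_block (q n : nat) (Lmat : 'M[F]_(n * n, q * q)) (i : 'I_n) (j : 'I_q)
  : 'M[F]_(n, q) := \matrix_(r < n, s < q) Lmat (mxvec_index i r) (mxvec_index j s).

Definition choi (q n : nat) (Lmap : 'M[F]_q -> 'M[F]_n) :=
  \mxblock_(i < q, j < q) (Lmap (delta_mx i j) : 'M[F]_(n, n)).

Definition blocks_span (q n : nat) (Lmat : 'M[F]_(n * n, q * q)) : {vspace 'M[F]_(n, q)} :=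
  span [seq mx_block Lmat i j | i <- enum 'I_n, j <- enum 'I_q].

Definition fam_span (q n m : nat) (A : 'I_m -> 'M[F]_(n, q)) : {vspace 'M[F]_(n, q)} :=
  span [seq A k | k <- enum 'I_m].

Definition hill_rep (q n m : nat) (Lmap : 'M[F]_q -> 'M[F]_n)
  (A : 'I_m -> 'M[F]_(n, q)) (H : 'M[F]_m) : Prop :=
  forall V : 'M[F]_q,
    Lmap V = \sum_(k < m) \sum_(l < m) H k l *: (A l *m V *m adjmx (A k)).

Definition min_hill_rep (q n m : nat) (Lmap : 'M[F]_q -> 'M[F]_n)
  (A : 'I_m -> 'M[F]_(n, q)) (H : 'M[F]_m) : Prop :=
  hill_rep Lmap A H /\
  forall (m' : nat) (A' : 'I_m' -> 'M[F]_(n, q)) (H' : 'M[F]_m'),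
    hill_rep Lmap A' H' -> (m <= m')%N.

(* The construction. alpha i j k = alpha^{ij}_k, beta k i j = beta^k_{ij}. *)
Definition alpha_ok (q n m : nat) (Lmat : 'M[F]_(n * n, q * q))
  (Ls : 'I_m -> 'M[F]_(n, q)) (alpha : 'I_n -> 'I_q -> 'I_m -> F) : Prop :=
  forall i j, mx_block Lmat i j = \sum_(k < m) alpha i j k *: Ls k.

Definition beta_ok (q n m : nat) (Lmat : 'M[F]_(n * n, q * q))
  (Ls : 'I_m -> 'M[F]_(n, q)) (beta : 'I_m -> 'I_n -> 'I_q -> F) : Prop :=
  forall k, Ls k = \sum_(i < n) \sum_(j < q) beta k i j *: mx_block Lmat i j.

Definition hill_A (q n m : nat) (alpha : 'I_n -> 'I_q -> 'I_m -> F) (k : 'I_m)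
  : 'M[F]_(n, q) := \matrix_(i < n, j < q) conj (alpha i j k).

Definition hill_B (q n m : nat) (beta : 'I_m -> 'I_n -> 'I_q -> F) (k : 'I_m)
  : 'M[F]_(n, q) := \matrix_(i < n, j < q) beta k i j.

Definition hill_H (q n m : nat) (Ls : 'I_m -> 'M[F]_(n, q))
  (beta : 'I_m -> 'I_n -> 'I_q -> F) : 'M[F]_m :=
  \matrix_(k < m, l < m) \tr (hill_B beta k *m adjmx (Ls l)).

Definition theorem1p1_stmt : Prop :=
  forall (q n : nat) (Lmap : 'M[F]_q -> 'M[F]_n) (Lmat : 'M[F]_(n * n, q * q)) (m : nat),
    linear Lmap -> star_linear Lmap -> is_matricization Lmap Lmat ->
    m = \rank (choi Lmap) ->
    [/\
        forall (Ls : 'I_m -> 'M[F]_(n, q)), fam_span Ls = blocks_span Lmat ->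
        forall alpha beta, alpha_ok Lmat Ls alpha -> beta_ok Lmat Ls beta ->
          min_hill_rep Lmap (hill_A alpha) (hill_H Ls beta),
        forall (m' : nat) (A : 'I_m' -> 'M[F]_(n, q)) (H : 'M[F]_m'),
          min_hill_rep Lmap A H ->
          exists Ls : 'I_m' -> 'M[F]_(n, q), fam_span Ls = blocks_span Lmat /\
          exists alpha beta, [/\ alpha_ok Lmat Ls alpha, beta_ok Lmat Ls beta,
                                 A = hill_A alpha & H = hill_H Ls beta],
        forall (m' : nat) (A : 'I_m' -> 'M[F]_(n, q)) (H : 'M[F]_m'),
          min_hill_rep Lmap A H -> fam_span A = blocks_span Lmat
      &
        forall (A : 'I_m -> 'M[F]_(n, q)), fam_span A = blocks_span Lmat ->
          exists H : 'M[F]_m, min_hill_rep Lmap A H].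

End Hill.

From HB Require Import structures.
From mathcomp Require Import all_boot all_order all_algebra.
From mathcomp Require Import reals complex.
From Stdlib Require Import FunctionalExtensionality.
Set Implicit Arguments. Unset Strict Implicit. Unset Printing Implicit Defensive.
Import Order.TTheory GRing.Theory Num.Theory.
Local Open Scope ring_scope.

(* Write L_ij for the
   blocks of the matricization, so that L(E_sj)_ri = (L_ij)_rs.

   - A Hill representation (A, H) is characterized blockwise (hill_repP):
       L_ij = sum_l (sum_k H_kl conj (A_k)_ij) A_l.
     Hence span{L_ij} is contained in span{A_k}, and since the map reading
     a matrix along the rows of the transposed Choi matrix is injective,
     dim span{L_ij} = rank(Choi) (dim_blocks) bounds the number of terms.
   - Star-linearity makes the blocks conjugate-symmetric (block_sym); this
     gives the key identity L_k = sum_l H_kl A_l of the construction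
     (construction_Ls) and thus that it yields a Hill representation.  With a
     basis of span{L_ij} this shows that minimal representations have exactly
     rank(Choi) terms, so their A_k form a basis of span{L_ij}.
   - For linearly independent A_k the Hill matrix is unique, which gives (b);
     changing the family of matrices of a constructed representation gives (d). *)

Section Spans.
Variables (K : fieldType) (vT : vectType K).

Lemma span_mapP (I : finType) (g : I -> vT) v :
  reflect (exists c : I -> K, v = \sum_i c i *: g i)
          (v \in <<[seq g i | i <- enum I]>>%VS).
Proof.
apply: (iffP idP) => [|[c ->]].
  rewrite span_def big_map big_enum /= => /memv_sumP [vs Hvs ->].
  have /fin_all_exists [c Hc] : forall i, exists k : K, vs i = k *: g i.
    by move=> i; apply/vlineP/Hvs.
  by exists c; apply: eq_bigr => i _; rewrite Hc.
by apply: memv_suml => i _; apply/memvZ/memv_span/map_f; rewrite mem_enum.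
Qed.

Lemma span_pairP a b (g : 'I_a -> 'I_b -> vT) v :
  reflect (exists c : 'I_a -> 'I_b -> K, v = \sum_i \sum_j c i j *: g i j)
          (v \in <<[seq g i j | i <- enum 'I_a, j <- enum 'I_b]>>%VS).
Proof.
rewrite (@eq_span _ _ _ [seq g p.1 p.2 | p <- enum {: 'I_a * 'I_b}]); last first.
  move=> x; apply/allpairsP/mapP => [[[i j] [_ _ ->]] | [[i j] _ ->]].
    by exists (i, j); rewrite ?mem_enum.
  by exists (i, j); rewrite ?mem_enum.
apply: (iffP (span_mapP _ _)) => [[c ->] | [c ->]].
  by exists (fun i j => c (i, j)); rewrite pair_big; apply: eq_bigr => -[].
by exists (fun p => c p.1 p.2); rewrite pair_big.
Qed.

Lemma free_familyP m (g : 'I_m -> vT) :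
  reflect (forall c : 'I_m -> K, \sum_k c k *: g k = 0 -> forall k, c k = 0)
          (free [seq g k | k <- enum 'I_m]).
Proof.
have gE c : \sum_(k < m) c k *: [tuple g k | k < m]`_k = \sum_k c k *: g k.
  by apply: eq_bigr => k _; rewrite -tnth_nth tnth_mktuple.
rewrite -[[seq g k | k <- enum 'I_m]]/(tval [tuple g k | k < m]).
by apply: (iffP freeP) => fr c; [rewrite -gE | rewrite gE]; apply: fr.
Qed.

Lemma dim_span_inj (wT : vectType K) (f : vT -> wT) :
  linear f -> injective f -> forall X : seq vT, \dim <<map f X>> = \dim <<X>>.
Proof.
move=> flin finj X.
pose fL : {linear vT -> wT} := HB.pack f (GRing.isLinear.Build _ _ _ _ f flin).
have -> : map f X = map (linfun fL) X by apply: eq_map => x; rewrite lfunE.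
have /eqP ker0 : lker (linfun fL) == 0%VS.
  by apply/lker0P => x y; rewrite !lfunE; apply: finj.
by rewrite -limg_span limg_dim_eq // ker0 capv0.
Qed.

End Spans.

Lemma span_rowsE (K : fieldType) p d (M : 'M[K]_(p, d)) (v : 'rV[K]_d) :
  (v \in <<[seq row i M | i <- enum 'I_p]>>%VS) = (v <= M)%MS.
Proof.
apply/span_mapP/submxP => [[c ->]|[D ->]].
  by exists (\row_i c i); rewrite mulmx_sum_row; apply: eq_bigr => i _; rewrite mxE.
by exists (fun i => D 0 i); rewrite mulmx_sum_row.
Qed.

Lemma dim_span_rows (K : fieldType) p d (M : 'M[K]_(p, d)) :
  \dim <<[seq row i M | i <- enum 'I_p]>> = \rank M.
Proof.
have -> : <<[seq row i M | i <- enum 'I_p]>>%VS =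
          <<[seq row i (row_base M) | i <- enum 'I_(\rank M)]>>%VS.
  by apply/vspaceP => v; rewrite !span_rowsE eq_row_base.
have /eqP -> : free [seq row i (row_base M) | i <- enum 'I_(\rank M)].
  apply/free_familyP => c hc k.
  have : \row_i c i *m row_base M = 0.
    by rewrite mulmx_sum_row -[RHS]hc; apply: eq_bigr => i _; rewrite mxE.
  by move/eqP; rewrite mulmx_free_eq0 ?row_base_free // => /eqP/rowP/(_ k); rewrite !mxE.
by rewrite size_map size_enum_ord.
Qed.

Lemma map_nth_enum (T : Type) (x0 : T) (X : seq T) m :
  size X = m -> [seq nth x0 X k | k : 'I_m <- enum 'I_m] = X.
Proof.
move=> <-; rewrite (map_comp (nth x0 X) (@nat_of_ord _) (enum 'I_(size X))).
by rewrite val_enum_ord -[RHS](mkseq_nth x0).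
Qed.

Lemma linear_expand (R : comNzRingType) p (U : lmodType R) (f : 'M[R]_p -> U) :
  linear f -> forall V, f V = \sum_s \sum_j V s j *: f (delta_mx s j).
Proof.
move=> flin V.
pose fL : {linear 'M[R]_p -> U} := HB.pack f (GRing.isLinear.Build _ _ _ _ f flin).
rewrite -[f]/(fL : _ -> _) {1}(matrix_sum_delta V) linear_sum.
by apply: eq_bigr => s _; rewrite linear_sum; apply: eq_bigr => j _; rewrite linearZ.
Qed.

Lemma mul_delta_entry (R : pzRingType) a b c d (B : 'M[R]_(a, b)) (s : 'I_b) (j : 'I_c)
  (C : 'M[R]_(c, d)) r i : (B *m delta_mx s j *m C) r i = B r s * C j i.
Proof.
rewrite -(mul_delta_mx (0 : 'I_1)) mulmxA -colE -mulmxA -rowE mxE big_ord1.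
by rewrite !mxE.
Qed.

Lemma mulmx_comb (R : comNzRingType) a b c d m (x y : 'I_m -> R)
    (X : 'I_m -> 'M[R]_(a, b)) (Y : 'I_m -> 'M[R]_(c, d)) (V : 'M[R]_(b, c)) :
  (\sum_p x p *: X p) *m V *m (\sum_r y r *: Y r) =
  \sum_p \sum_r (x p * y r) *: (X p *m V *m Y r).
Proof.
rewrite !mulmx_suml; apply: eq_bigr => p _.
rewrite -!scalemxAl mulmx_sumr scaler_sumr; apply: eq_bigr => r _.
by rewrite -scalemxAr scalerA.
Qed.

Lemma vecmx_entry (F : fieldType) r s (T : 'M[F]_(r, s)) (i : 'I_s) (a : 'I_r) :
  vecmx T (mxvec_index i a) 0 = T a i.
Proof. by rewrite /vecmx mxE mxvecE mxE. Qed.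

Section Hill.
Variables (F : fieldType) (conj : {rmorphism F -> F}).
Hypothesis conjK : involutive conj.
Local Notation adj := (adjmx conj).

Lemma adj_entry r s (A : 'M[F]_(r, s)) i j : adj A i j = conj (A j i).
Proof. by rewrite !mxE. Qed.

Lemma adj_delta p (s j : 'I_p) : adj (delta_mx s j) = delta_mx j s.
Proof. by rewrite /adjmx map_delta_mx trmx_delta. Qed.

Lemma adj_comb m r s (c : 'I_m -> F) (A : 'I_m -> 'M[F]_(r, s)) :
  adj (\sum_k c k *: A k) = \sum_k conj (c k) *: adj (A k).
Proof.
apply/matrixP => x y; rewrite adj_entry !summxE rmorph_sum.
by apply: eq_bigr => k _; rewrite !mxE rmorphM.
Qed.

Lemma trace_mul_adj r s (B C : 'M[F]_(r, s)) :
  \tr (B *m adj C) = \sum_a \sum_b B a b * conj (C a b).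
Proof.
by apply: eq_bigr => a _; rewrite mxE; apply: eq_bigr => b _; rewrite adj_entry.
Qed.

Definition hill_sum q n m (A : 'I_m -> 'M[F]_(n, q)) (H : 'M[F]_m) (V : 'M[F]_q)
    : 'M[F]_n :=
  \sum_(k < m) \sum_(l < m) H k l *: (A l *m V *m adj (A k)).

Variables (q n : nat) (Lmap : 'M[F]_q -> 'M[F]_n) (Lmat : 'M[F]_(n * n, q * q)).
Hypotheses (Llin : linear Lmap) (Lstar : star_linear conj Lmap)
  (Lmat_vec : is_matricization Lmap Lmat).
Local Notation rk := (\rank (choi Lmap)).

Lemma block_entry i j r s : mx_block Lmat i j r s = Lmap (delta_mx s j) r i.
Proof.
rewrite mxE -(vecmx_entry (Lmap _)) -Lmat_vec /vecmx trmx_delta mxvec_delta.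
by rewrite trmx_delta -colE mxE.
Qed.

Lemma block_sym i j r s : mx_block Lmat i j r s = conj (mx_block Lmat r s i j).
Proof. by rewrite !block_entry -[delta_mx j s]adj_delta Lstar adj_entry conjK. Qed.

Lemma hill_sum_linear m (A : 'I_m -> 'M[F]_(n, q)) (H : 'M[F]_m) :
  linear (hill_sum A H).
Proof.
move=> a V W; rewrite /hill_sum scaler_sumr -big_split; apply: eq_bigr => k _.
rewrite scaler_sumr -big_split; apply: eq_bigr => l _.
by rewrite mulmxDr mulmxDl -scalemxAr -scalemxAl scalerDr !scalerA mulrC.
Qed.

Lemma hill_sum_delta m (A : 'I_m -> 'M[F]_(n, q)) (H : 'M[F]_m) s j r i :
  hill_sum A H (delta_mx s j) r i =
  (\sum_l (\sum_k H k l * conj (A k i j)) *: A l) r s.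
Proof.
rewrite !summxE; under eq_bigr => k _ do rewrite summxE.
rewrite exchange_big; apply: eq_bigr => l _; rewrite mxE mulr_suml.
by apply: eq_bigr => k _; rewrite [LHS]mxE mul_delta_entry adj_entry mulrA mulrAC.
Qed.

Lemma hill_repP m (A : 'I_m -> 'M[F]_(n, q)) (H : 'M[F]_m) :
  hill_rep conj Lmap A H <->
  forall i j, mx_block Lmat i j = \sum_l (\sum_k H k l * conj (A k i j)) *: A l.
Proof.
split=> [hr i j | hb V].
  by apply/matrixP => r s; rewrite block_entry hr hill_sum_delta.
rewrite (linear_expand Llin) -/(hill_sum A H V).
rewrite (linear_expand (hill_sum_linear A H)).
apply: eq_bigr => s _; apply: eq_bigr => j _; congr (_ *: _).
by apply/matrixP => r i; rewrite hill_sum_delta -hb block_entry.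
Qed.

(* The Choi matrix is indexed by pairs (j, b) : 'I_q * 'I_n, via tagnat. *)
Local Notation S1 := (@tagnat.sig1 q (fun=> n)).
Local Notation S2 := (@tagnat.sig2 q (fun=> n)).
Local Notation Rank := (@tagnat.Rank q (fun=> n)).

Lemma Rank1K (j : 'I_q) (b : 'I_n) : S1 (Rank j b) = j.
Proof. exact: tagnat.Rank1K. Qed.

Lemma Rank2K (j : 'I_q) (b : 'I_n) : S2 (Rank j b) = b.
Proof. by apply: val_inj; rewrite tagnat.Rank2K. Qed.

(* Reading an n x q matrix along the index set of the Choi matrix; the rows of
   the transposed Choi matrix are the images of the blocks L_ij. *)
Definition choi_row (Y : 'M[F]_(n, q)) : 'rV[F]_(\sum_(j < q) n) :=
  \row_t Y (S2 t) (S1 t).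

Lemma choi_row_linear : linear choi_row.
Proof. by move=> a Y Z; apply/rowP => t; rewrite !mxE. Qed.

Lemma choi_row_inj : injective choi_row.
Proof.
move=> Y Z /rowP eYZ; apply/matrixP => b j.
by have := eYZ (Rank j b); rewrite !mxE Rank1K Rank2K.
Qed.

Lemma choi_rowE t : row t (choi Lmap)^T = choi_row (mx_block Lmat (S2 t) (S1 t)).
Proof. by apply/rowP => s; rewrite [RHS]mxE block_entry !mxE. Qed.

Lemma dim_blocks : \dim (blocks_span Lmat) = rk.
Proof.
rewrite /blocks_span -(dim_span_inj choi_row_linear choi_row_inj).
rewrite -mxrank_tr -dim_span_rows; congr (\dim _); apply: eq_span => x.
apply/mapP/mapP => [[Y /allpairsP [[b j] [_ _ ->]] ->] | [t _ ->]].
  by exists (Rank j b); rewrite ?mem_enum // choi_rowE Rank1K Rank2K.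
exists (mx_block Lmat (S2 t) (S1 t)); rewrite ?choi_rowE //.
by apply/allpairsP; exists (S2 t, S1 t); rewrite !mem_enum.
Qed.

Lemma fam_spanP m (A : 'I_m -> 'M[F]_(n, q)) Y :
  reflect (exists c : 'I_m -> F, Y = \sum_k c k *: A k) (Y \in fam_span A).
Proof. exact: span_mapP. Qed.

Lemma blocks_spanP Y :
  reflect (exists c : 'I_n -> 'I_q -> F, Y = \sum_i \sum_j c i j *: mx_block Lmat i j)
          (Y \in blocks_span Lmat).
Proof. exact: span_pairP. Qed.

Lemma fam_span_mem m (A : 'I_m -> 'M[F]_(n, q)) k : A k \in fam_span A.
Proof. by apply/memv_span/map_f; rewrite mem_enum. Qed.

Lemma blocks_span_mem i j : mx_block Lmat i j \in blocks_span Lmat.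
Proof. by apply: memv_span; apply/allpairsP; exists (i, j); rewrite !mem_enum. Qed.

Lemma dim_fam_span m (A : 'I_m -> 'M[F]_(n, q)) : (\dim (fam_span A) <= m)%N.
Proof. by rewrite (leq_trans (dim_span _)) // size_map size_enum_ord. Qed.

Lemma fam_span_coef_uniq m (A : 'I_m -> 'M[F]_(n, q)) : \dim (fam_span A) = m ->
  forall c d : 'I_m -> F,
  \sum_k c k *: A k = \sum_k d k *: A k -> forall k, c k = d k.
Proof.
move=> hd c d e k; apply/eqP; rewrite -subr_eq0; apply/eqP; move: k.
have /free_familyP : free [seq A k | k <- enum 'I_m].
  by rewrite /free size_map size_enum_ord; apply/eqP.
by apply; under eq_bigr do rewrite scalerBl; rewrite sumrB e subrr.
Qed.

Lemma hill_blocks_sub m (A : 'I_m -> 'M[F]_(n, q)) (H : 'M[F]_m) :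
  hill_rep conj Lmap A H -> (blocks_span Lmat <= fam_span A)%VS.
Proof.
move=> /hill_repP hb; apply/span_subvP => _ /allpairsP [[i j] [_ _ ->]].
by apply/fam_spanP; eexists; apply: hb.
Qed.

Lemma hill_size_ge m (A : 'I_m -> 'M[F]_(n, q)) (H : 'M[F]_m) :
  hill_rep conj Lmap A H -> (rk <= m)%N.
Proof.
move=> hr; rewrite -dim_blocks (leq_trans (dimvS (hill_blocks_sub hr))) //.
exact: dim_fam_span.
Qed.

Section Construction.
Variables (m : nat) (Ls : 'I_m -> 'M[F]_(n, q)) (alpha : 'I_n -> 'I_q -> 'I_m -> F)
  (beta : 'I_m -> 'I_n -> 'I_q -> F).
Hypotheses (alphaP : alpha_ok Lmat Ls alpha) (betaP : beta_ok Lmat Ls beta).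

(* The key identity L_k = sum_l H_kl A_l of the construction; it uses the
   symmetry of the blocks coming from star-linearity. *)
Lemma construction_Ls k :
  Ls k = \sum_l hill_H conj Ls beta k l *: hill_A conj alpha l.
Proof.
apply/matrixP => r s; rewrite (betaP k) summxE.
under eq_bigr => a _ do rewrite summxE.
under eq_bigr => a _ do under eq_bigr => b _ do
  rewrite mxE block_sym (alphaP r s) summxE rmorph_sum mulr_sumr.
rewrite summxE; under [RHS]eq_bigr => l _ do rewrite !mxE trace_mul_adj mulr_suml.
under [RHS]eq_bigr => l _ do under eq_bigr => a _ do rewrite mulr_suml.
rewrite [RHS]exchange_big /=; apply: eq_bigr => a _.
rewrite [RHS]exchange_big /=; apply: eq_bigr => b _; apply: eq_bigr => l _.
by rewrite !mxE rmorphM mulrA mulrAC.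
Qed.

Lemma construction_hill_rep :
  hill_rep conj Lmap (hill_A conj alpha) (hill_H conj Ls beta).
Proof.
apply/hill_repP => i j; rewrite alphaP.
under eq_bigr => k _ do rewrite construction_Ls scaler_sumr.
rewrite exchange_big; apply: eq_bigr => l _; rewrite scaler_suml.
apply: eq_bigr => k _; rewrite scalerA [hill_H _ _ _ _ _]mxE [hill_A _ _ _ _ _]mxE.
by rewrite conjK mulrC.
Qed.

End Construction.

Lemma coefficients_exist m (Ls : 'I_m -> 'M[F]_(n, q)) :
  fam_span Ls = blocks_span Lmat ->
  exists alpha beta, alpha_ok Lmat Ls alpha /\ beta_ok Lmat Ls beta.
Proof.
move=> hs.
have alpha_ij i j : exists a : 'I_m -> F, mx_block Lmat i j = \sum_k a k *: Ls k.
  by apply/fam_spanP; rewrite hs blocks_span_mem.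
have /fin_all_exists [alpha alphaP] i : exists a : 'I_q -> 'I_m -> F,
    forall j, mx_block Lmat i j = \sum_k a j k *: Ls k.
  exact: fin_all_exists (alpha_ij i).
have /fin_all_exists [beta betaP] : forall k, exists b : 'I_n -> 'I_q -> F,
    Ls k = \sum_i \sum_j b i j *: mx_block Lmat i j.
  by move=> k; apply/blocks_spanP; rewrite -hs fam_span_mem.
by exists alpha, beta.
Qed.

Lemma spanning_family_exists : exists Ls : 'I_rk -> 'M[F]_(n, q),
  fam_span Ls = blocks_span Lmat.
Proof.
set U := blocks_span Lmat; exists (fun k => (vbasis U)`_k).
rewrite /fam_span map_nth_enum ?size_tuple ?dim_blocks //.
exact: span_basis (vbasisP U).
Qed.

Lemma hill_rep_exists : exists (A : 'I_rk -> 'M[F]_(n, q)) H,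
  hill_rep conj Lmap A H.
Proof.
have [Ls /coefficients_exist [alpha [beta [alphaP betaP]]]] := spanning_family_exists.
by exists (hill_A conj alpha), (hill_H conj Ls beta); exact: construction_hill_rep.
Qed.

Lemma min_hill_size m (A : 'I_m -> 'M[F]_(n, q)) (H : 'M[F]_m) :
  min_hill_rep conj Lmap A H -> m = rk.
Proof.
move=> [hr hmin]; apply/eqP; rewrite eqn_leq (hill_size_ge hr) andbT.
by have [A0 [H0 /hmin]] := hill_rep_exists.
Qed.

Lemma rank_hill_span m (A : 'I_m -> 'M[F]_(n, q)) (H : 'M[F]_m) :
  hill_rep conj Lmap A H -> m = rk -> fam_span A = blocks_span Lmat.
Proof.
move=> hr hm; apply/eqP; rewrite eq_sym eqEdim (hill_blocks_sub hr) /=.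
by rewrite dim_blocks -hm dim_fam_span.
Qed.

Lemma rank_hill_dim m (A : 'I_m -> 'M[F]_(n, q)) (H : 'M[F]_m) :
  hill_rep conj Lmap A H -> m = rk -> \dim (fam_span A) = m.
Proof. by move=> hr hm; rewrite (rank_hill_span hr hm) dim_blocks hm. Qed.

Lemma hill_matrix_unique m (A : 'I_m -> 'M[F]_(n, q)) (H1 H2 : 'M[F]_m) :
  \dim (fam_span A) = m ->
  hill_rep conj Lmap A H1 -> hill_rep conj Lmap A H2 -> H1 = H2.
Proof.
move=> hd /hill_repP h1 /hill_repP h2; apply/matrixP => k l.
have hij i j : \sum_k H1 k l * conj (A k i j) = \sum_k H2 k l * conj (A k i j).
  by move: l; apply: (fam_span_coef_uniq hd); rewrite -h1 -h2.
have conj_coef (G : 'M[F]_m) i j :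
    (\sum_k conj (G k l) *: A k) i j = conj (\sum_k G k l * conj (A k i j)).
  by rewrite summxE rmorph_sum; apply: eq_bigr => k' _; rewrite mxE rmorphM conjK.
have hc : \sum_k conj (H1 k l) *: A k = \sum_k conj (H2 k l) *: A k.
  by apply/matrixP => i j; rewrite !conj_coef hij.
by apply: (can_inj conjK); apply: (fam_span_coef_uniq hd hc).
Qed.

Lemma hill_change_family m (A A0 : 'I_m -> 'M[F]_(n, q)) (H0 S : 'M[F]_m) :
  (forall l, A0 l = \sum_p S p l *: A p) -> hill_rep conj Lmap A0 H0 ->
  hill_rep conj Lmap A (\matrix_(r, p) \sum_k \sum_l conj (S r k) * H0 k l * S p l).
Proof.
move=> hA hr V; rewrite hr /hill_sum.
have e k l : H0 k l *: (A0 l *m V *m adj (A0 k)) = \sum_p \sum_r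
    (H0 k l * (S p l * conj (S r k))) *: (A p *m V *m adj (A r)).
  rewrite !hA adj_comb mulmx_comb scaler_sumr; apply: eq_bigr => p _.
  by rewrite scaler_sumr; apply: eq_bigr => r _; rewrite scalerA.
under eq_bigr => k _ do under eq_bigr => l _ do rewrite e pair_big.
under eq_bigr => k _ do rewrite exchange_big /=.
rewrite exchange_big /= [RHS]exchange_big /= [RHS]pair_big /=.
apply: eq_bigr => -[p r] _ /=; rewrite mxE scaler_suml; apply: eq_bigr => k _.
rewrite scaler_suml; apply: eq_bigr => l _.
by congr (_ *: _); rewrite [S p l * _]mulrC mulrA [H0 k l * _]mulrC.
Qed.


(* (a): the construction yields a minimal Hill representation; the spanning
   hypothesis of the statement is implied by alpha_ok and beta_ok. *)
Lemma construction_min_hill_rep (Ls : 'I_rk -> 'M[F]_(n, q)) alpha beta :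
  alpha_ok Lmat Ls alpha -> beta_ok Lmat Ls beta ->
  min_hill_rep conj Lmap (hill_A conj alpha) (hill_H conj Ls beta).
Proof.
move=> alphaP betaP; split; first exact: construction_hill_rep.
by move=> m' A' H' /hill_size_ge.
Qed.

(* (b): a minimal Hill representation (A, H) arises from the construction
   applied to L_k = sum_l H_kl A_l and alpha^{ij}_k = conj (A_k)_ij. *)
Lemma min_hill_rep_construction m (A : 'I_m -> 'M[F]_(n, q)) (H : 'M[F]_m) :
  min_hill_rep conj Lmap A H ->
  exists Ls : 'I_m -> 'M[F]_(n, q), fam_span Ls = blocks_span Lmat /\
  exists alpha beta, [/\ alpha_ok Lmat Ls alpha, beta_ok Lmat Ls beta,
                         A = hill_A conj alpha & H = hill_H conj Ls beta].
Proof.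
move=> hmin; have hm := min_hill_size hmin; have [hr _] := hmin.
pose Ls k := \sum_l H k l *: A l.
pose alpha i j k := conj (A k i j).
have alphaP : alpha_ok Lmat Ls alpha.
  move=> i j; rewrite ((hill_repP A H).1 hr i j).
  under [RHS]eq_bigr => k _ do rewrite scaler_sumr.
  rewrite [RHS]exchange_big; apply: eq_bigr => l _; rewrite scaler_suml.
  by apply: eq_bigr => k _; rewrite scalerA mulrC.
have hsL : fam_span Ls = blocks_span Lmat.
  apply/eqP; rewrite eqEsubv; apply/andP; split.
    rewrite -(rank_hill_span hr hm); apply/span_subvP => _ /mapP [k _ ->].
    by apply/fam_spanP; exists (H k).
  apply/span_subvP => _ /allpairsP [[i j] [_ _ ->]].
  by apply/fam_spanP; exists (alpha i j); exact: alphaP.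
have /fin_all_exists [beta betaP] k : exists b : 'I_n -> 'I_q -> F,
    Ls k = \sum_i \sum_j b i j *: mx_block Lmat i j.
  by apply/blocks_spanP; rewrite -hsL fam_span_mem.
have hA : A = hill_A conj alpha.
  by apply: functional_extensionality => k; apply/matrixP => i j; rewrite mxE conjK.
exists Ls; split => //; exists alpha, beta; split => //.
apply: (hill_matrix_unique (rank_hill_dim hr hm) hr).
by rewrite hA; exact: construction_hill_rep.
Qed.

Lemma min_hill_rep_span m (A : 'I_m -> 'M[F]_(n, q)) (H : 'M[F]_m) :
  min_hill_rep conj Lmap A H -> fam_span A = blocks_span Lmat.
Proof. by move=> hmin; apply: (rank_hill_span hmin.1); exact: min_hill_size hmin. Qed.

(* (d): any spanning family of rank(Choi) matrices carries a minimal Hill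
   representation, obtained by re-expressing a constructed one. *)
Lemma spanning_min_hill_rep (A : 'I_rk -> 'M[F]_(n, q)) :
  fam_span A = blocks_span Lmat -> exists H : 'M[F]_rk, min_hill_rep conj Lmap A H.
Proof.
move=> hs; have [A0 [H0 h0]] := hill_rep_exists.
have hs0 := rank_hill_span h0 erefl.
have /fin_all_exists [S' S'P] l : exists c : 'I_rk -> F, A0 l = \sum_p c p *: A p.
  by apply/fam_spanP; rewrite hs -hs0 fam_span_mem.
pose S := \matrix_(p, l) S' l p.
exists (\matrix_(r, p) \sum_k \sum_l conj (S r k) * H0 k l * S p l).
split; last by move=> m' A' H' /hill_size_ge.
by apply: (hill_change_family _ h0) => l; rewrite S'P; apply: eq_bigr => p _; rewrite mxE.
Qed.

End Hill.

Theorem hill_theorem (F : fieldType) (conj : {rmorphism F -> F}) :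
  involutive conj -> theorem1p1_stmt conj.
Proof.
move=> conjK q n Lmap Lmat m Llin Lstar Lmat_vec ->; split.
- by move=> Ls _; exact: construction_min_hill_rep.
- exact: min_hill_rep_construction.
- exact: min_hill_rep_span.
- exact: spanning_min_hill_rep.
Qed.

Theorem theorem1p1 (R : realType) :
  theorem1p1_stmt (fun x : R => x) /\ theorem1p1_stmt (fun x : R[i] => Num.conj x).
Proof.
split; first exact: (@hill_theorem _ idfun).
exact: (@hill_theorem _ Num.conj conjCK).
Qed.
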